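(* Let $f\in\mathbb V(\mathcal E_\oplus)$ and set $g:=-2\imath\,\Pi B(A-\imath B^\top TB)^{-1}f$. If $p\in\mathbb V(\Gamma_\oplus)$ solves $(I+\Pi S)p=g$, then $u:=(A-\imath B^\top TB)^{-1}(B^\top Tp+f)$ belongs to $\operatorname{range}(R)$, and $u_\Omega:=(R^\top R)^{-1}R^\top u$ (so that $Ru_\Omega=u$) satisfies $R^\top AR\,u_\Omega=R^\top f$; i.e. $u_\Omega$ is the unique solution of the global system $A_\Omega u_\Omega=f_\Omega$ with $A_\Omega:=R^\top AR$, $f_\Omega:=R^\top f$.
   Context: Let $\mathcal E$ be a finite set, $\mathcal E_1,\dots,\mathcal E_J$ subsets with $\mathcal E=\bigcup_j\mathcal E_j$, $\Sigma:=\bigcup_{1\le j<k\le J}(\mathcal E_j\cap\mathcal E_k)$, $\Gamma$ any set with $\Sigma\subset\Gamma\subset\mathcal E$, $\Gamma_j:=\Gamma\cap\mathcal E_j$. $\mathbb V(\mathcal F):=\mathbb C^{\mathcal F}$; $\mathbb V(\mathcal E_\oplus):=\prod_j\mathbb V(\mathcal E_j)$, $\mathbb V(\Gamma_\oplus):=\prod_j\mathbb V(\Gamma_j)$. Restrictions: $Rx=((x_e)_{e\in\mathcal E_1},\dots,(x_e)_{e\in\mathcal E_J})$ for $x\in\mathbb V(\mathcal E)$ ($R^\top R$ is the diagonal matrix with entries $\#\{j:e\in\mathcal E_j\}\ge1$); $Qx=((x_e)_{e\in\Gamma_1},\dots,(x_e)_{e\in\Gamma_J})$ for $x\in\mathbb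 V(\Gamma)$; $B_jx=(x_e)_{e\in\Gamma_j}$ for $x\in\mathbb V(\mathcal E_j)$, $B:=\mathrm{diag}(B_j)$; $\top$ is the non-conjugated transpose. For each $j$ let $T_j$ be a real symmetric positive definite matrix on $\mathbb V(\Gamma_j)$, $T:=\mathrm{diag}(T_1,\dots,T_J)$, $P:=Q(Q^\top TQ)^{-1}Q^\top T$, $\Pi:=2P-I$. Let $A=\mathrm{diag}(A_1,\dots,A_J)$, $A_j\in\mathbb C^{\mathcal E_j\times\mathcal E_j}$, satisfying (A1) $\operatorname{Im}(\bar v^\top Av)\le0$ for all $v\in\mathbb V(\mathcal E_\oplus)$ and (A2) $R^\top AR$ invertible; then $A-\imath B^\top TB$ is invertible. Scattering matrix: $S:=I+2\imath B(A-\imath B^\top TB)^{-1}B^\top T$. *)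

(* Complex scalars: an arbitrary numClosedFieldType C
   (e.g. algC, or complex R for a real closed field R). *)
From HB Require Import structures.
From mathcomp Require Import all_boot all_order all_algebra.
Set Implicit Arguments. Unset Strict Implicit. Unset Printing Implicit Defensive.
Import Order.TTheory GRing.Theory Num.Theory.
Local Open Scope ring_scope.

Section Defs.
Variable C : numClosedFieldType.
Variables (E : finType) (J : nat) (Ej : 'I_J -> {set E}) (Gam : {set E}).

Definition Sigma : {set E} :=
  \bigcup_(j < J) \bigcup_(k < J | (j < k)%N) (Ej j :&: Ej k).

(* index set of V(E_oplus) = prod_j V(E_j): pairs (j,e) with e in E_j *)
Definition Eidx : finType := {x : 'I_J * E | x.2 \in Ej x.1}.
(* index set of V(Gamma_oplus): pairs (j,e) with e in Gamma_j = Gamma ∩ E_j *)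
Definition Gidx : finType := {x : 'I_J * E | x.2 \in Gam :&: Ej x.1}.
Definition Gset : finType := {e : E | e \in Gam}.

Definition mx_of (X Y : finType) (f : X -> Y -> C) : 'M[C]_(#|X|, #|Y|) :=
  \matrix_(i, j) f (enum_val i) (enum_val j).

Definition Rmx : 'M[C]_(#|Eidx|, #|E|) :=
  mx_of (fun (p : Eidx) (e : E) => ((val p).2 == e)%:R).
Definition Qmx : 'M[C]_(#|Gidx|, #|Gset|) :=
  mx_of (fun (p : Gidx) (e : Gset) => ((val p).2 == val e)%:R).
(* B = diag(B_j), B_j : V(E_j) -> V(Gamma_j) restriction *)
Definition Bmx : 'M[C]_(#|Gidx|, #|Eidx|) :=
  mx_of (fun (p : Gidx) (q : Eidx) => (val p == val q)%:R).
Definition Tmx (Tj : 'I_J -> E -> E -> C) : 'M[C]_(#|Gidx|) :=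
  mx_of (fun (p q : Gidx) =>
    if (val p).1 == (val q).1 then Tj (val p).1 (val p).2 (val q).2 else 0).
Definition Amx (Aj : 'I_J -> E -> E -> C) : 'M[C]_(#|Eidx|) :=
  mx_of (fun (p q : Eidx) =>
    if (val p).1 == (val q).1 then Aj (val p).1 (val p).2 (val q).2 else 0).

Definition Pmx (Tj : 'I_J -> E -> E -> C) : 'M[C]_(#|Gidx|) :=
  Qmx *m invmx (Qmx^T *m Tmx Tj *m Qmx) *m Qmx^T *m Tmx Tj.
Definition PImx (Tj : 'I_J -> E -> E -> C) : 'M[C]_(#|Gidx|) :=
  2%:R *: Pmx Tj - 1%:M.
Definition Kmx (Aj Tj : 'I_J -> E -> E -> C) : 'M[C]_(#|Eidx|) :=
  Amx Aj - 'i *: (Bmx^T *m Tmx Tj *m Bmx).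
Definition Smx (Aj Tj : 'I_J -> E -> E -> C) : 'M[C]_(#|Gidx|) :=
  1%:M + (2%:R * 'i) *: (Bmx *m invmx (Kmx Aj Tj) *m Bmx^T *m Tmx Tj).

End Defs.

Definition real_sym_pd (C : numClosedFieldType) (E : finType) (G : {set E})
  (M : E -> E -> C) : Prop :=
  [/\ forall e e', e \in G -> e' \in G -> M e e' \is Num.real,
      forall e e', e \in G -> e' \in G -> M e e' = M e' e &
      forall v : E -> C, (forall e, v e \is Num.real) ->
        (exists2 e, e \in G & v e != 0) ->
        0 < \sum_(e in G) \sum_(e' in G) v e * M e e' * v e'].

From HB Require Import structures.
From mathcomp Require Import all_boot all_order all_algebra ring.
Import Order.TTheory GRing.Theory Num.Theory.
Set Implicit Arguments. Unset Strict Implicit. Unset Printing Implicit Defensive.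
Local Open Scope ring_scope.

(* Write [c := B u] for the interface trace of [u = K^-1 (B^T T p + f)], where
   [K = A - i B^T T B], and [P] for the [T]-orthogonal projection onto the
   range of [Q].  The equation [(I + Pi S) p = g] is exactly
   [p + (2P - I)(p + 2i c) = 0] ([transmission_eq]); for an idempotent [P]
   this forces [P c = c] and [P (p + i c) = 0] ([reflection_fixed]).  The
   first says that the interface traces of [u] come from a single interface
   field, so [u] is a global field [R w] ([consistent_in_range], which uses
   [Sigma \subset Gamma]).  The second says [Q^T T (p + i c) = 0], and since
   [B R = Q G] this gives [R^T B^T T (p + i c) = 0]; as
   [A u = B^T T (p + i c) + f], we get [R^T A R w = R^T f].

   Invertibility of [K], of [Q^T T Q] and of [R^T R] comes from a small theory
   of Hermitian forms: congruences of positive definite forms by real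
   injective matrices are invertible, and a dissipative [A] perturbed by
   [-i B^T T B] stays invertible ([dissipative_unit]). *)

Lemma unitmx_of_inj (F : fieldType) n (A : 'M[F]_n) :
  (forall x : 'cV_n, A *m x = 0 -> x = 0) -> A \in unitmx.
Proof.
move=> Ainj; rewrite unitmxE unitfE -det_tr; apply/negP => /det0P [v nz_v vA0].
have := Ainj v^T; rewrite -(trmxK A) -trmx_mul vA0 trmx0 => /(_ erefl) /eqP.
by rewrite trmx_eq0 (negbTE nz_v).
Qed.

Section Reflection.
Variables (F : fieldType) (n : nat) (P : 'M[F]_n) (a : F).
Hypotheses (two_neq0 : (2%:R : F) != 0) (a_neq0 : a != 0) (P_idem : P *m P = P).

Lemma reflection_fixed (p c : 'cV[F]_n) :
  p + (2%:R *: P - 1%:M) *m (p + (2%:R * a) *: c) = 0 ->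
  P *m c = c /\ P *m (p + a *: c) = 0.
Proof.
rewrite mulmxBl mul1mx -scalemxAl mulmxDr -scalemxAr => eq_pc.
have eq1 : P *m p + (2%:R * a) *: (P *m c) - a *: c = 0.
  move: eq_pc; move: (P *m p) (P *m c) => X Y eq_pc.
  apply/matrixP => i j; move/matrixP/(_ i j): eq_pc; rewrite !mxE => eq_ij.
  have : 2%:R * (X i j + 2%:R * a * Y i j - a * c i j) = 0.
    by rewrite -[RHS]eq_ij; ring.
  by move/eqP; rewrite mulf_eq0 (negbTE two_neq0) => /eqP.
have eq2 : P *m p + (2%:R * a) *: (P *m c) - a *: (P *m c) = 0.
  by move: (congr1 (mulmx P) eq1); rewrite !(mulmxDr, mulmxN, scalemxAr, mulmxA) P_idem mulmx0.
have Pc : P *m c = c.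
  move: eq1 eq2; move: (P *m p) (P *m c) => X Y eq1 eq2.
  apply/matrixP => i j; move/matrixP/(_ i j): eq1; move/matrixP/(_ i j): eq2.
  rewrite !mxE => e2 e1; have /eqP : a * (Y i j - c i j) = 0.
    by rewrite -[RHS](subrr 0) -{1}e1 -e2; ring.
  by rewrite mulf_eq0 (negbTE a_neq0) subr_eq0 => /eqP.
split => //; rewrite mulmxDr -scalemxAr -[RHS]eq2.
by move: (P *m p) (P *m c) => X Y; apply/matrixP => i j; rewrite !mxE; ring.
Qed.

End Reflection.

Section ObliqueProjection.
Variables (F : fieldType) (m n : nat) (Q : 'M[F]_(m, n)) (T : 'M[F]_m).
Hypothesis QTQ_unit : Q^T *m T *m Q \in unitmx.

Let P := Q *m invmx (Q^T *m T *m Q) *m Q^T *m T.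

Lemma proj_idem : P *m P = P.
Proof.
have -> : P *m P = Q *m (invmx (Q^T *m T *m Q) *m (Q^T *m T *m Q))
                   *m invmx (Q^T *m T *m Q) *m Q^T *m T by rewrite /P !mulmxA.
by rewrite mulVmx // mulmx1.
Qed.

Lemma proj_fixed_range (c : 'cV_m) : P *m c = c -> exists y, Q *m y = c.
Proof.
by move=> Pc; exists (invmx (Q^T *m T *m Q) *m Q^T *m T *m c); rewrite -{2}Pc /P !mulmxA.
Qed.

Lemma proj_kernel (r : 'cV_m) : (forall y : 'cV_n, Q *m y = 0 -> y = 0) ->
  P *m r = 0 -> Q^T *m T *m r = 0.
Proof.
move=> Qinj Pr0; have /Qinj y0 : Q *m (invmx (Q^T *m T *m Q) *m (Q^T *m T *m r)) = 0.
  by rewrite -Pr0 /P !mulmxA.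
by rewrite -[Q^T *m T *m r](mulKVmx QTQ_unit) y0 mulmx0.
Qed.

End ObliqueProjection.

Lemma transmission_eq (F : fieldType) m n (Pi T : 'M[F]_m) (B : 'M[F]_(m, n))
    (N : 'M[F]_n) (a : F) (p : 'cV_m) (f : 'cV_n) :
  (1%:M + Pi *m (1%:M + a *: (B *m N *m B^T *m T))) *m p = - a *: (Pi *m B *m N *m f) ->
  p + Pi *m (p + a *: (B *m (N *m (B^T *m T *m p + f)))) = 0.
Proof.
move=> /eqP; rewrite -subr_eq0 => /eqP <-.
rewrite !(mulmxDr, mulmxDl, mul1mx, mulmx1, scalerDr) -!scalemxAr -!scalemxAl !mulmxA scaleNr opprK.
by rewrite !addrA.
Qed.

Section HermitianForms.
Variable C : numClosedFieldType.

Definition hform n (T : 'M[C]_n) (z : 'cV[C]_n) : C :=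
  ((map_mx Num.conj z)^T *m T *m z) 0 0.

Definition pos_def n (T : 'M[C]_n) : Prop := forall z, z != 0 -> 0 < hform T z.

Lemma hform0 n (T : 'M[C]_n) : hform T 0 = 0.
Proof. by rewrite /hform mulmx0 mxE. Qed.

Lemma hform_real_mul m n (T : 'M[C]_m) (X : 'M[C]_(m, n)) v :
  map_mx Num.conj X = X -> hform T (X *m v) = hform (X^T *m T *m X) v.
Proof. by move=> Xreal; rewrite /hform map_mxM Xreal trmx_mul !mulmxA. Qed.

Lemma pos_def1 n : pos_def (1%:M : 'M[C]_n).
Proof.
move=> z nz_z; suff -> : hform 1%:M z = dotmx z^T z^T by rewrite dnorm_gt0 trmx_eq0.
by rewrite dotmxE /hform mulmx1 !mxE; apply: eq_bigr => k _; rewrite !mxE mulrC.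
Qed.

Lemma congruence_unit m n (T : 'M[C]_m) (X : 'M[C]_(m, n)) :
  pos_def T -> map_mx Num.conj X = X -> (forall x : 'cV_n, X *m x = 0 -> x = 0) ->
  X^T *m T *m X \in unitmx.
Proof.
move=> Tpd Xreal Xinj; apply: unitmx_of_inj => x XTXx0; apply: Xinj.
have [//|/Tpd] := eqVneq (X *m x) 0.
by rewrite hform_real_mul // /hform -mulmxA XTXx0 mulmx0 mxE ltxx.
Qed.

(* A symmetric matrix that is positive on nonzero real vectors is positive
   definite: [hform T (x + i y) = hform T x + hform T y] for real [x], [y]. *)
Lemma pos_def_of_real n (T : 'M[C]_n) :
  T^T = T ->
  (forall x, map_mx Num.conj x = x -> x != 0 -> 0 < hform T x) -> pos_def T.
Proof.
move=> Tsym Treal z nz_z.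
pose x := map_mx (fun c => 'Re c) z; pose y := map_mx (fun c => 'Im c) z.
have x_real : map_mx Num.conj x = x.
  by apply/matrixP => k l; rewrite !mxE conj_Creal ?Creal_Re.
have y_real : map_mx Num.conj y = y.
  by apply/matrixP => k l; rewrite !mxE conj_Creal ?Creal_Im.
have z_rect : z = x + 'i *: y by apply/matrixP => k l; rewrite !mxE -Crect.
have ge0 v : map_mx Num.conj v = v -> 0 <= hform T v.
  by move=> v_real; have [->|/(Treal _ v_real)/ltW //] := eqVneq v 0; rewrite hform0.
have hform_rect : hform T z = hform T x + hform T y.
  have yTx : (y^T *m T *m x) 0 0 = (x^T *m T *m y) 0 0.
    have tr11 (M : 'M[C]_1) : M 0 0 = M^T 0 0 by rewrite mxE.
    by rewrite tr11 !trmx_mul trmxK Tsym mulmxA.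
  have conj_z : map_mx Num.conj z = x - 'i *: y.
    by apply/matrixP => k l; rewrite !mxE {1}[z k l]Crect conjC_rect ?Creal_Re ?Creal_Im.
  rewrite /hform conj_z {1}z_rect linearB linearZ /=.
  rewrite x_real y_real mulmxBl !mulmxDr !mulmxBl -!scalemxAl -!scalemxAr.
  move: yTx; set xTx := x^T *m T *m x; set xTy := x^T *m T *m y.
  set yTx := y^T *m T *m x; set yTy := y^T *m T *m y.
  clearbody xTx xTy yTx yTy => yTx_sym; rewrite !mxE yTx_sym.
  by rewrite mulrA -expr2 sqrCi; ring.
rewrite hform_rect.
have [x0|nz_x] := eqVneq x 0.
  have nz_y : y != 0 by apply: contra_neq nz_z => y0; rewrite z_rect x0 y0 scaler0 addr0.
  by rewrite x0 hform0 add0r Treal.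
by rewrite ltr_pwDl ?ge0 ?Treal.
Qed.

Lemma dissipative_unit m n k (A : 'M[C]_n) (B : 'M[C]_(m, n)) (T : 'M[C]_m)
    (R : 'M[C]_(n, k)) :
  (forall v, 'Im (hform A v) <= 0) -> pos_def T -> map_mx Num.conj B = B ->
  R^T *m A *m R \in unitmx ->
  (forall v : 'cV_n, B *m v = 0 -> exists w, R *m w = v) ->
  A - 'i *: (B^T *m T *m B) \in unitmx.
Proof.
move=> A_diss Tpd Breal RAR_unit kerB_sub; apply: unitmx_of_inj => v Kv0.
have hform_K : hform A v = 'i * hform T (B *m v).
  have : hform (A - 'i *: (B^T *m T *m B)) v = 0.
    by rewrite /hform -mulmxA Kv0 mulmx0 mxE.
  rewrite hform_real_mul // /hform mulmxBr mulmxBl -scalemxAr -scalemxAl !mxE.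
  by move/eqP; rewrite subr_eq0 => /eqP.
have Bv0 : B *m v = 0.
  apply/eqP; apply: contraTT (A_diss v) => /Tpd Bv_gt0.
  by rewrite hform_K ImMil (Creal_ReP _ (gtr0_real Bv_gt0)) lt_geF.
have Av0 : A *m v = 0.
  by move: Kv0; rewrite mulmxBl -scalemxAl -!mulmxA Bv0 !mulmx0 scaler0 subr0.
have [w Rw] := kerB_sub v Bv0.
suff w0 : w = 0 by rewrite -Rw w0 mulmx0.
by rewrite -(mulKmx RAR_unit w) -!mulmxA Rw Av0 !mulmx0.
Qed.

End HermitianForms.

Section MatchingMatrices.
Variable C : numClosedFieldType.

Definition match_mx (X Y : finType) (Z : eqType) (a : X -> Z) (b : Y -> Z) :
  'M[C]_(#|X|, #|Y|) := mx_of (fun x y => (a x == b y)%:R).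

Lemma match_mx_mul (X Y : finType) (Z : eqType) (a : X -> Z) (b : Y -> Z)
    k (M : 'M[C]_(#|Y|, k)) x y l :
  injective b -> a x = b y -> (match_mx a b *m M) (enum_rank x) l = M (enum_rank y) l.
Proof.
move=> b_inj axy; rewrite mxE (bigD1 (enum_rank y)) //= big1 ?addr0.
  by rewrite !mxE !enum_rankK axy eqxx mul1r.
move=> j nj; rewrite !mxE enum_rankK axy (inj_eq b_inj).
case: eqP => [yj|_]; last by rewrite mul0r.
by rewrite yj enum_valK eqxx in nj.
Qed.

Lemma match_mx_real (X Y : finType) (Z : eqType) (a : X -> Z) (b : Y -> Z) :
  map_mx Num.conj (match_mx a b) = match_mx a b.
Proof. by apply/matrixP => i j; rewrite !mxE conjC_nat. Qed.

End MatchingMatrices.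

Section DomainDecomposition.
Variables (C : numClosedFieldType) (E : finType) (J : nat).
Variables (Ej : 'I_J -> {set E}) (Gam : {set E}).

Local Notation Rm := (Rmx C Ej).
Local Notation Qm := (Qmx C Ej Gam).
Local Notation Bm := (Bmx C Ej Gam).
Local Notation EI := (Eidx Ej).
Local Notation GI := (Gidx Ej Gam).
Local Notation GS := (Gset Gam).

Definition Gmx : 'M[C]_(#|GS|, #|E|) := match_mx C (fun b : GS => val b) id.

Lemma Rmx_mul k (M : 'M[C]_(#|E|, k)) (q : EI) l :
  (Rm *m M) (enum_rank q) l = M (enum_rank (val q).2) l.
Proof. exact: (match_mx_mul (a := fun q : EI => (val q).2) (b := id)). Qed.

Lemma Qmx_mul k (M : 'M[C]_(#|GS|, k)) (g : GI) (b : GS) l :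
  (val g).2 = val b -> (Qm *m M) (enum_rank g) l = M (enum_rank b) l.
Proof.
exact: (match_mx_mul (a := fun g : GI => (val g).2) (b := fun b : GS => val b) _ _ val_inj).
Qed.

Lemma Bmx_mul k (M : 'M[C]_(#|EI|, k)) (g : GI) (q : EI) l :
  val g = val q -> (Bm *m M) (enum_rank g) l = M (enum_rank q) l.
Proof.
exact: (match_mx_mul (a := fun g : GI => val g) (b := fun q : EI => val q) _ _ val_inj).
Qed.

Lemma Rmx_real : map_mx Num.conj Rm = Rm.
Proof. exact: (@match_mx_real C _ _ _ (fun q : EI => (val q).2) id). Qed.

Lemma Qmx_real : map_mx Num.conj Qm = Qm.
Proof. exact: (@match_mx_real C _ _ _ (fun g : GI => (val g).2) (fun b : GS => val b)). Qed.

Lemma Bmx_real : map_mx Num.conj Bm = Bm.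
Proof. exact: (@match_mx_real C _ _ _ (fun g : GI => val g) (fun q : EI => val q)). Qed.

Lemma BR_QG : Bm *m Rm = Qm *m Gmx.
Proof.
apply/matrixP => i l; rewrite -[i]enum_valK; set g := enum_val i.
have /setIP[eG ej] := valP g.
rewrite (Bmx_mul _ (q := Sub (val g) ej)) // (Qmx_mul _ (b := Sub (val g).2 eG)) //.
by rewrite !mxE !enum_rankK.
Qed.

Lemma QT_kernel_sub (s : 'cV[C]_#|GI|) : Qm^T *m s = 0 -> Rm^T *m Bm^T *m s = 0.
Proof. by move=> QTs0; rewrite -trmx_mul BR_QG trmx_mul -mulmxA QTs0 mulmx0. Qed.

Section Covering.
Hypothesis cover : \bigcup_(j < J) Ej j = [set: E].

Lemma covered (e : E) : exists j, e \in Ej j.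
Proof.
have /bigcupP[j _ ej] : e \in \bigcup_(j < J) Ej j by rewrite cover inE.
by exists j.
Qed.

Lemma Rmx_inj (x : 'cV[C]_#|E|) : Rm *m x = 0 -> x = 0.
Proof.
move=> Rx0; apply/matrixP => i l; rewrite -[i]enum_valK.
have [j ej] := covered (enum_val i).
have qP : (j, enum_val i).2 \in Ej (j, enum_val i).1 by [].
by rewrite -(Rmx_mul x (Sub (j, enum_val i) qP : EI)) Rx0 !mxE.
Qed.

Lemma Qmx_inj (y : 'cV[C]_#|GS|) : Qm *m y = 0 -> y = 0.
Proof.
move=> Qy0; apply/matrixP => i l; rewrite -[i]enum_valK.
have [j ej] := covered (val (enum_val i)).
have gP : (j, val (enum_val i)).2 \in Gam :&: Ej (j, val (enum_val i)).1.
  by rewrite inE ej (valP (enum_val i)).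
by rewrite -(Qmx_mul y (g := Sub (j, val (enum_val i)) gP)) ?Qy0 ?mxE.
Qed.

(* [R^T R = R^T I R] is a congruence of the identity by the real injective [R]. *)
Lemma RtR_unit : Rm^T *m Rm \in unitmx.
Proof.
by have := congruence_unit (@pos_def1 C _) Rmx_real Rmx_inj; rewrite mulmx1.
Qed.

End Covering.

Section Interface.
Hypothesis interface : Sigma Ej \subset Gam.

Lemma shared_in_Gamma (e : E) (j k : 'I_J) :
  j != k -> e \in Ej j -> e \in Ej k -> e \in Gam.
Proof.
move=> njk ej ek; apply: (subsetP interface); apply/bigcupP.
case: (ltngtP j k) => [ljk|lkj|/val_inj jk]; last by rewrite jk eqxx in njk.
  by exists j => //; apply/bigcupP; exists k => //; rewrite inE ej ek.
by exists k => //; apply/bigcupP; exists j => //; rewrite inE ej ek.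
Qed.

Lemma trace_consistent (v : 'cV[C]_#|EI|) (y : 'cV[C]_#|GS|) :
  Bm *m v = Qm *m y ->
  forall q q' : EI, (val q).2 = (val q').2 -> v (enum_rank q) 0 = v (enum_rank q') 0.
Proof.
move=> Bv_Qy q q' same_e.
have [jj'|nj] := eqVneq (val q).1 (val q').1.
  have -> // : q = q'; apply: val_inj.
  by move: jj' same_e; case: (val q) (val q') => ? ? [? ?] /= -> ->.
have eG : (val q).2 \in Gam by apply: (shared_in_Gamma nj (valP q)); rewrite same_e (valP q').
have gP : (val q).2 \in Gam :&: Ej (val q).1 by rewrite inE eG (valP q).
have gP' : (val q').2 \in Gam :&: Ej (val q').1 by rewrite inE (valP q') andbT -same_e.
pose b : GS := Sub (val q).2 eG.
rewrite -(Bmx_mul v (g := Sub (val q) gP)) // -(Bmx_mul v (g := Sub (val q') gP')) // Bv_Qy.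
by rewrite (Qmx_mul y (b := b)) // (Qmx_mul y (b := b)).
Qed.

Lemma consistent_in_range (v : 'cV[C]_#|EI|) (y : 'cV[C]_#|GS|) :
  Bm *m v = Qm *m y -> exists w, Rm *m w = v.
Proof.
move=> Bv_Qy.
exists (\col_k (if [pick i | (val (enum_val i : EI)).2 == enum_val k] is Some i
                then v i 0 else 0)).
apply/matrixP => i l; rewrite (ord1 l) -[i]enum_valK Rmx_mul mxE enum_rankK.
case: pickP => [i' /eqP same_e | /(_ (enum_rank (enum_val i)))]; last by rewrite enum_rankK eqxx.
by rewrite -[i']enum_valK; apply: (trace_consistent Bv_Qy).
Qed.

End Interface.

Section InterfaceOperator.
Variable Tj : 'I_J -> E -> E -> C.
Hypothesis Tj_spd : forall j : 'I_J, real_sym_pd (Gam :&: Ej j) (Tj j).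

Local Notation Tm := (Tmx Ej Gam Tj).

Lemma sum_Gidx (F : 'I_J * E -> C) :
  \sum_(k < #|GI|) F (val (enum_val k)) =
  \sum_(j < J) \sum_(e in Gam :&: Ej j) F (j, e).
Proof.
rewrite pair_big_dep /= (reindex_omap (val : GI -> 'I_J * E) insub) /=; last first.
  by move=> [j e] /= jeP; rewrite insubT.
rewrite -(big_enum_val (fun g : GI => F (val g))) /=.
apply: eq_big => [g|g _]; last by case: (val g).
by rewrite valK eqxx (valP g).
Qed.

Definition block_coord (x : 'cV[C]_#|GI|) (j : 'I_J) (e : E) : C :=
  if insub (j, e) : option GI is Some g then x (enum_rank g) 0 else 0.

Lemma block_coord_val x k :
  block_coord x (val (enum_val k : GI)).1 (val (enum_val k : GI)).2 = x k 0.
Proof. by rewrite /block_coord -surjective_pairing valK enum_valK. Qed.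

Lemma Tmx_quad (x : 'cV[C]_#|GI|) :
  (x^T *m Tm *m x) 0 0 =
  \sum_(j < J) \sum_(e in Gam :&: Ej j) \sum_(e' in Gam :&: Ej j)
     block_coord x j e * Tj j e e' * block_coord x j e'.
Proof.
pose Tt (a b : 'I_J * E) := if a.1 == b.1 then Tj a.1 a.2 b.2 else 0.
pose bc (a : 'I_J * E) := block_coord x a.1 a.2.
transitivity (\sum_(k < #|GI|) \sum_(l < #|GI|)
   bc (val (enum_val k)) * Tt (val (enum_val k)) (val (enum_val l)) * bc (val (enum_val l))).
  rewrite mxE; under eq_bigr => l _ do rewrite mxE mulr_suml.
  rewrite exchange_big /=; apply: eq_bigr => k _; apply: eq_bigr => l _.
  by rewrite !mxE /bc !block_coord_val.
rewrite (sum_Gidx (fun a =>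
  \sum_(l < #|GI|) bc a * Tt a (val (enum_val l)) * bc (val (enum_val l)))).
apply: eq_bigr => j _; apply: eq_bigr => e _.
rewrite (sum_Gidx (fun b => bc (j, e) * Tt (j, e) b * bc b)) (bigD1 j) //=.
rewrite [X in _ + X]big1 ?addr0; first by apply: eq_bigr => e' _; rewrite /Tt eqxx.
move=> j' nj; apply: big1 => e' _.
by rewrite /Tt /= eq_sym (negbTE nj) mulr0 mul0r.
Qed.

Lemma Tmx_sym : Tm^T = Tm.
Proof.
apply/matrixP => k l; rewrite !mxE.
case: (val (enum_val k : GI)) (valP (enum_val k)) => j1 e1 e1P.
case: (val (enum_val l : GI)) (valP (enum_val l)) => j2 e2 e2P /=.
rewrite eq_sym; case: eqP => // j21; subst j2.
by have [_ Tj_sym _] := Tj_spd j1; rewrite Tj_sym.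
Qed.

(* [T] is positive definite: each block [T_j] is, and a nonzero interface
   vector has a nonzero block. *)
Lemma Tmx_pos_def : pos_def Tm.
Proof.
apply: pos_def_of_real Tmx_sym _ => x x_real nz_x.
pose Tq j := \sum_(e in Gam :&: Ej j) \sum_(e' in Gam :&: Ej j)
               block_coord x j e * Tj j e e' * block_coord x j e'.
have bc_real j e : block_coord x j e \is Num.real.
  rewrite /block_coord; case: insub => [g|]; last exact: real0.
  by rewrite CrealE; move/matrixP/(_ (enum_rank g) 0): x_real; rewrite mxE => ->.
have Tq_gt0 j : (exists2 e, e \in Gam :&: Ej j & block_coord x j e != 0) -> 0 < Tq j.
  by have [_ _ Tj_pos] := Tj_spd j; apply: Tj_pos (bc_real j).
have Tq_ge0 j : 0 <= Tq j.
  case: (pickP (fun e => (e \in Gam :&: Ej j) && (block_coord x j e != 0))).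
    by move=> e /andP[eG nz_e]; apply/ltW/Tq_gt0; exists e.
  move=> bc0; rewrite /Tq big1 // => e eG; apply: big1 => e' _.
  by move: (bc0 e); rewrite eG => /negbFE/eqP ->; rewrite !mul0r.
have [k nz_k] : exists k, x k 0 != 0.
  case: (pickP (fun k => x k 0 != 0)) => [k|x0]; first by exists k.
  case/eqP: nz_x; apply/matrixP => k l; rewrite (ord1 l) mxE.
  by apply/eqP/negbFE/x0.
have /Tq_gt0 Tq_pos : exists2 e, e \in Gam :&: Ej (val (enum_val k : GI)).1 &
    block_coord x (val (enum_val k : GI)).1 e != 0.
  by exists (val (enum_val k : GI)).2; rewrite ?block_coord_val // (valP (enum_val k)).
rewrite /hform x_real Tmx_quad -/(\sum_(j < J) Tq j) (bigD1 (val (enum_val k : GI)).1) //=.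
by apply: ltr_pwDl Tq_pos _; apply: sumr_ge0.
Qed.

End InterfaceOperator.

End DomainDecomposition.

Theorem mainTheorem11 (C : numClosedFieldType) (E : finType) (J : nat)
  (Ej : 'I_J -> {set E}) (Gam : {set E})
  (Aj Tj : 'I_J -> E -> E -> C)
  (hcover : \bigcup_(j < J) Ej j = [set: E])
  (hSigma : Sigma Ej \subset Gam)
  (hT : forall j : 'I_J, real_sym_pd (Gam :&: Ej j) (Tj j))
  (hA1 : forall v : 'cV[C]_(#|Eidx Ej|),
     'Im (((map_mx Num.conj v)^T *m Amx Ej Aj *m v) ord0 ord0) <= 0)
  (hA2 : (Rmx C Ej)^T *m Amx Ej Aj *m Rmx C Ej \in unitmx)
  (f : 'cV[C]_(#|Eidx Ej|)) (p : 'cV[C]_(#|Gidx Ej Gam|))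
  (hp : (1%:M + PImx Ej Gam Tj *m Smx Ej Gam Aj Tj) *m p
        = - (2%:R * 'i) *: (PImx Ej Gam Tj *m Bmx C Ej Gam
                            *m invmx (Kmx Ej Gam Aj Tj) *m f)) :
  let u := invmx (Kmx Ej Gam Aj Tj) *m ((Bmx C Ej Gam)^T *m Tmx Ej Gam Tj *m p + f) in
  let uO := invmx ((Rmx C Ej)^T *m Rmx C Ej) *m (Rmx C Ej)^T *m u in
  [/\ exists w : 'cV[C]_(#|E|), Rmx C Ej *m w = u,
      Rmx C Ej *m uO = u,
      (Rmx C Ej)^T *m Amx Ej Aj *m Rmx C Ej *m uO = (Rmx C Ej)^T *m f &
      forall v : 'cV[C]_(#|E|),
        (Rmx C Ej)^T *m Amx Ej Aj *m Rmx C Ej *m v = (Rmx C Ej)^T *m f -> v = uO].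
Proof.
move=> u uO.
set R := Rmx C Ej; set Q := Qmx C Ej Gam; set B := Bmx C Ej Gam.
set T := Tmx Ej Gam Tj; set A := Amx Ej Aj; set K := Kmx Ej Gam Aj Tj.
have T_pd : pos_def T := Tmx_pos_def hT.
have QTQ_unit : Q^T *m T *m Q \in unitmx.
  exact: congruence_unit T_pd (Qmx_real _ _ _) (Qmx_inj hcover).
have K_unit : K \in unitmx.
  apply: dissipative_unit hA1 T_pd (Bmx_real _ _ _) hA2 _ => v Bv0.
  by apply: (consistent_in_range hSigma (y := 0)); rewrite Bv0 mulmx0.
have scat : p + PImx Ej Gam Tj *m (p + (2%:R * 'i) *: (B *m u)) = 0.
  exact: transmission_eq hp.
have two_neq0 : (2%:R : C) != 0 by rewrite pnatr_eq0.
have [PBu PBu_r] := reflection_fixed two_neq0 (neq0Ci C) (proj_idem QTQ_unit) scat.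
have [y Qy] := proj_fixed_range PBu.
have [w Rw] := consistent_in_range hSigma (esym Qy).
have QTr := proj_kernel QTQ_unit (Qmx_inj hcover) PBu_r.
have Au : A *m u = B^T *m T *m (p + 'i *: (B *m u)) + f.
  have : K *m u = B^T *m T *m p + f by rewrite /u mulmxA mulmxV // mul1mx.
  rewrite /K /Kmx mulmxBl -scalemxAl => /eqP; rewrite subr_eq => /eqP ->.
  by rewrite mulmxDr -scalemxAr !mulmxA addrAC.
have RAu : R^T *m (A *m u) = R^T *m f.
  have RBTr : R^T *m B^T *m (T *m (p + 'i *: (B *m u))) = 0.
    by apply: QT_kernel_sub; rewrite mulmxA.
  by rewrite Au mulmxDr -(mulmxA B^T) mulmxA RBTr add0r.
have uOw : uO = w.
  by rewrite /uO -Rw !mulmxA -(mulmxA _ R^T) -mulmxA mulKmx // RtR_unit.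
split; first by exists w.
- by rewrite uOw.
- by rewrite uOw -!mulmxA Rw RAu.
- move=> v RARv; rewrite -(mulKmx hA2 v) RARv uOw.
  by rewrite -(mulKmx hA2 w) -!mulmxA Rw RAu !mulmxA.
Qed.
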